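(* Let $p,p'\ge1$ with $|p-p'|=1$ and let $S=\alpha_{(p,p')}(S')$ where $S'$ is a Sturmian word in which $bb$ does not occur. Let $P$ be a palindrome that is maximal in $S$. Then $P$ is original (in the level $S=\alpha_{(p,p')}(S')$) if and only if $|P|_b\le 1$.
   Context: $\alpha_{(p,p')}$ is the morphism $a\mapsto a^pb$, $b\mapsto a^{p'}b$. A Sturmian word is a right-infinite aperiodic word over $\{a,b\}$ with exactly $n+1$ factors of each length $n$. A palindrome $P$ is maximal in $S$ if $lPl'$ is a factor of $S$ for some letters $l\neq l'$; such an occurrence of $P$ is a maximal occurrence. A center occurrence is an occurrence of $a$, $b$ or $aa$. Write $S'=y_1y_2\cdots$, $S=\alpha(y_1)\alpha(y_2)\cdots$, $\alpha(y_j)$ occupying positions $s_j+1,\dots,s_j+|\alpha(y_j)|$, $s_j=\sum_{t<j}|\alpha(y_t)|$. The reflection of an occurrence $y_j=a$ (resp. $b$) is the center (middle letter if odd length, middle two letters if even) of the run $a^p$ (resp. $a^{p'}$) at positions $s_j+1,\dots,s_j+p$ (resp. $s_j+p'$); the reflection of an occurrence $y_jy_{j+1}=aa$ is the $b$ at position $s_j+p+1$. A center occurrence of $S$ is original if it is not the reflection of any center occurrence of $S'$. A maximal palindrome $P$ of $S$ is original if some maximal occurrence of $P$ in $S$ has an original center occurrence, and is a reflection otherwise. *)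

(* Words over {a,b} encoded as bool: a = false, b = true.
   Infinite words are functions nat -> bool, positions are 0-based. *)
From mathcomp Require Import all_boot.
Set Implicit Arguments. Unset Strict Implicit. Unset Printing Implicit Defensive.

Definition occurs (S : nat -> bool) (w : seq bool) (i : nat) : Prop :=
  forall k, k < size w -> S (i + k) = nth false w k.

Definition factor (S : nat -> bool) (w : seq bool) : Prop := exists i, occurs S w i.

Definition aperiodic (S : nat -> bool) : Prop :=
  ~ exists N T, 0 < T /\ forall n, N <= n -> S (n + T) = S n.

Definition sturmian (S : nat -> bool) : Prop :=
  aperiodic S /\
  forall n, exists s : seq (seq bool),
    [/\ uniq s, size s = n.+1 & forall w, w \in s <-> (size w = n /\ factor S w)].

Definition palindrome (w : seq bool) : Prop := rev w = w.

Definition maximal_occ (S : nat -> bool) (P : seq bool) (i : nat) : Prop :=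
  [/\ 0 < i, occurs S P i & S i.-1 != S (i + size P)].

Definition maximal (S : nat -> bool) (P : seq bool) : Prop :=
  exists i, maximal_occ S P i.

(* a center occurrence (start, length): an occurrence of a or b (length 1)
   or of aa (length 2) *)
Definition is_center_occ (S : nat -> bool) (c : nat * nat) : Prop :=
  c.2 = 1 \/ [/\ c.2 = 2, S c.1 = false & S c.1.+1 = false].

Definition center_of (start len : nat) : nat * nat :=
  (start + (len.-1)./2, if odd len then 1 else 2).

(* |alpha_(p,p')(x)|, with alpha(a) = a^p b, alpha(b) = a^p' b *)
Definition alen (p p' : nat) (x : bool) : nat := (if x then p' else p).+1.

Definition spos (p p' : nat) (S' : nat -> bool) (j : nat) : nat :=
  \sum_(t < j) alen p p' (S' t).

(* S = alpha_(p,p')(S') : the block alpha(y_j) occupies positions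
   s_j, ..., s_j + |alpha(y_j)| - 1, and it is a^.. b *)
Definition is_image (p p' : nat) (S' S : nat -> bool) : Prop :=
  forall j k, k < alen p p' (S' j) ->
    S (spos p p' S' j + k) = (k == (alen p p' (S' j)).-1).

Definition reflection (p p' : nat) (S' : nat -> bool) (c : nat * nat) : nat * nat :=
  if c.2 == 2 then (spos p p' S' c.1 + p, 1)
  else center_of (spos p p' S' c.1) (if S' c.1 then p' else p).

Definition original_center (p p' : nat) (S' S : nat -> bool) (c : nat * nat) : Prop :=
  is_center_occ S c /\
  ~ exists c', is_center_occ S' c' /\ reflection p p' S' c' = c.

Definition original_pal (p p' : nat) (S' S : nat -> bool) (P : seq bool) : Prop :=
  exists i, maximal_occ S P i /\ original_center p p' S' S (center_of i (size P)).

From mathcomp Require Import all_boot zify.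
Set Implicit Arguments. Unset Strict Implicit.

(* Every b of S = alpha(S') ends a block a^p b or a^p' b.  If an occurrence of a
   palindrome has b's on both sides of its center, the nearest ones are mirror
   images, so the occurrence is centered on a window bounded by two b's: either an
   a-run a^L, centered at the reflection of a letter of S', or a separating b
   flanked by a^L and a^L'.  In the second case L = L', and since p <> p' and bb
   does not occur both blocks are a^p b: the center is the reflection of an aa.
   Two b's in P put b's on both sides of its center.  Conversely, a maximal
   occurrence with at most one b centered on such a window would either extend by
   an a on both sides, be bordered by the two b's of the window, or contain both. *)

Lemma count_true_gt1 (P : seq bool) :
  1 < count_mem true P <->
  exists k1 k2, [/\ k1 < k2, k2 < size P, nth false P k1 & nth false P k2].
Proof.
split.
- elim: P => [|b P IH] //=; case: b => /= [|/IH [k1 [k2 [? ? ? ?]]]]; last first.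
    by exists k1.+1, k2.+1.
  rewrite ltnS -has_count => /(has_nthP false) [k kP /eqP Pk].
  by exists 0, k.+1.
- move=> [k1 [k2 []]]; elim: P k1 k2 => [|b P IH] [|k1] [|k2] //= lt12 lt2 P1 P2.
  + by rewrite P1 ltnS -has_count; apply/(has_nthP false); exists k2 => //; apply/eqP.
  + by have := IH k1 k2 lt12 lt2 P1 P2; case: (b == true) => /=; lia.
Qed.

Section PalindromeOccurrence.
Variables (S : nat -> bool) (P : seq bool) (i : nat).
Hypotheses (occ : occurs S P i) (pal : palindrome P).

(* An occurrence at i is located by 2 * i + size P, twice its center plus one. *)
Lemma occurs_pal_mirror x y :
  i <= x -> i <= y -> x + y + 1 = 2 * i + size P -> S x = S y.
Proof.
move=> ix iy xy; rewrite -(subnKC ix) -(subnKC iy) !occ; try lia.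
by rewrite -{1}pal nth_rev; [congr nth|]; lia.
Qed.

Lemma occurs_count_le1 x y : count_mem true P <= 1 ->
  i <= x < i + size P -> i <= y < i + size P -> S x -> S y -> x = y.
Proof.
move=> cP /andP[ix xn] /andP[iy yn] Sx Sy.
wlog xy : x y ix xn iy yn Sx Sy / x <= y => [hw|].
  by case: (leqP x y) => [|/ltnW] xy; [|symmetry]; apply: hw.
rewrite leq_eqVlt in xy; case/orP: xy => [/eqP //|xy].
move: cP; rewrite leqNgt => /negP; case; apply/count_true_gt1.
exists (x - i), (y - i); split; try lia.
  by rewrite -occ ?subnKC //; lia.
by rewrite -occ ?subnKC //; lia.
Qed.

Lemma pal_true_before_center : 1 < count_mem true P ->
  exists2 x, i <= x /\ 2 * x + 1 < 2 * i + size P & S x.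
Proof.
move=> /count_true_gt1 [k1 [k2 [lt12 lt2 P1 P2]]].
have S1 : S (i + k1) by rewrite occ //; lia.
have S2 : S (i + k2) by rewrite occ.
case: (ltnP (2 * (i + k1) + 1) (2 * i + size P)) => k1P.
  by exists (i + k1) => //; split; lia.
exists (i + size P - 1 - k2); first by split; lia.
by rewrite (@occurs_pal_mirror _ (i + k2)) //; lia.
Qed.

(* The window [s, r) may have a b at the center of P: that is the separating b
   between two blocks. *)
Lemma pal_window_centered s r : i < s -> S s.-1 -> S r ->
  2 * s <= 2 * i + size P <= 2 * r ->
  (forall z, s <= z < r -> 2 * z + 1 != 2 * i + size P -> ~~ S z) ->
  2 * i + size P = s + r.
Proof.
move=> lt_is Ss Sr /andP[sc cr] run.
have Sl : S (2 * i + size P - s).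
  by rewrite (@occurs_pal_mirror _ s.-1) //; lia.
have rc : s + r <= 2 * i + size P.
  rewrite leqNgt; apply/negP => cr'.
  by move: Sl; apply/negP/run; lia.
have Sr' : S (2 * i + size P - 1 - r).
  by rewrite (@occurs_pal_mirror _ r) //; lia.
apply/eqP; rewrite eqn_leq rc andbT leqNgt; apply/negP => rc'.
by move: Sr'; apply/negP/run; lia.
Qed.

Lemma maximal_occ_window_uncentered s r : 0 < i -> S i.-1 != S (i + size P) ->
  count_mem true P <= 1 -> (0 < s -> S s.-1) -> S r -> s <= r ->
  2 * i + size P = s + r ->
  (forall z, s <= z < r -> 2 * z + 1 != s + r -> ~~ S z) -> False.
Proof.
move=> i_gt0 maxi cP Ss Sr sr c_sr run.
case: (ltngtP s i) => [si|lt_is|si].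
- have Si : ~~ S i.-1 by apply: run; lia.
  have Sn : ~~ S (i + size P) by apply: run; lia.
  by move: maxi; rewrite (negbTE Si) (negbTE Sn).
- have : s.-1 = r.
    by apply: (occurs_count_le1 cP); [lia|lia|apply: Ss; lia|exact: Sr].
  lia.
- have ri : r = i + size P by lia.
  by move: maxi; rewrite -ri -si Ss ?Sr //; lia.
Qed.

Lemma pal_center_occ : P != [::] -> count_mem true P <= 1 ->
  is_center_occ S (center_of i (size P)).
Proof.
move=> P0 cP; rewrite /is_center_occ /center_of /=; case: ifP => odd_n; [by left|right].
have n_gt0 : 0 < size P by rewrite lt0n size_eq0.
set h := (size P).-1./2.
have n_mod2 : size P %% 2 = 0 by rewrite modn2 odd_n.
have n_eq : size P = 2 * h + 2 by rewrite /h -divn2; lia.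
have E : S (i + h) = S (i + h).+1 by apply: occurs_pal_mirror; lia.
have Sh : S (i + h) = false.
  apply/negP => Sh.
  have : i + h = (i + h).+1 by apply: (occurs_count_le1 cP); rewrite -?E //; lia.
  lia.
by split; rewrite -?E.
Qed.

End PalindromeOccurrence.

Lemma center_ofE i n : 0 < n ->
  center_of i n = ((2 * i + n).-1./2, if odd (2 * i + n) then 1 else 2).
Proof.
move=> n_gt0; rewrite /center_of oddD mul2n odd_double /=; congr pair.
by rewrite -!divn2; lia.
Qed.

Lemma eq_center_of i n j m : 0 < n -> 0 < m ->
  center_of i n = center_of j m <-> 2 * i + n = 2 * j + m.
Proof.
move=> n_gt0 m_gt0; rewrite !center_ofE //; split => [[h o]|-> //].
have {}o : odd (2 * i + n) = odd (2 * j + m) by move: o; do 2 case: odd.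
move: h (modn2 (2 * i + n)) (modn2 (2 * j + m)); rewrite o -!divn2; lia.
Qed.

Section Image.
Variables (p p' : nat) (S' S : nat -> bool).
Hypotheses (p_gt0 : 0 < p) (p'_gt0 : 0 < p') (img : is_image p p' S' S).

Local Notation sp := (spos p p' S').
(* alpha(S' j) = a^(len j) b *)
Local Notation len j := (if S' j then p' else p).

Lemma len_gt0 j : 0 < len j.
Proof. by case: (S' j). Qed.

Lemma sposS j : sp j.+1 = sp j + (len j).+1.
Proof. by rewrite /spos big_ord_recr. Qed.

Lemma image_run j x : sp j <= x < sp j + len j -> S x = false.
Proof.
move=> /andP[sx xs]; rewrite -(subnKC sx) img /alen; last by case: (S' j) xs; lia.
by apply/eqP; case: (S' j) xs; lia.
Qed.

Lemma image_sep j : S (sp j + len j).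
Proof. by rewrite img /alen ?eqxx. Qed.

Lemma image_sep_pred j : 0 < sp j -> S (sp j).-1.
Proof.
case: j => [|j]; first by rewrite /spos big_ord0.
by rewrite sposS addnS /= => _; apply: image_sep.
Qed.

Lemma image_runs_around_sep j x : sp j <= x < sp j.+1 + len j.+1 -> x != sp j + len j ->
  S x = false.
Proof.
rewrite sposS => /andP[sx xs] xq; case: (ltnP x (sp j + len j)) => xq'.
  by apply: (image_run (j := j)); lia.
by apply: (image_run (j := j.+1)); rewrite sposS; lia.
Qed.

Lemma spos_cover x : exists j, sp j <= x <= sp j + len j.
Proof.
elim: x => [|x [j /andP[sx xs]]]; first by exists 0; rewrite /spos big_ord0.
case: (ltnP x (sp j + len j)) => xs'; first by exists j; lia.
by exists j.+1; rewrite sposS; lia.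
Qed.

Lemma eq_len_succ j : p != p' -> ~ (exists j, S' j && S' j.+1) ->
  len j = len j.+1 -> S' j = false /\ S' j.+1 = false.
Proof.
move=> pp' no_bb; case Sj: (S' j); case Sj1: (S' j.+1) => //.
- by case: no_bb; exists j; rewrite Sj Sj1.
- by move=> p'p; rewrite p'p eqxx in pp'.
- by move=> p_eq; rewrite p_eq eqxx in pp'.
Qed.

Section Occurrence.
Variables (P : seq bool) (i : nat).
Hypotheses (occ : occurs S P i) (pal : palindrome P).

Lemma reflection_of_run_center j x :
  i <= x -> 2 * x + 1 < 2 * i + size P -> S x ->
  2 * sp j < 2 * i + size P <= 2 * (sp j + len j) ->
  reflection p p' S' (j, 1) = center_of i (size P).
Proof.
move=> ix xc Sx /andP[sc cs].
have xs : x < sp j.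
  case: (ltnP x (sp j)) => // sx.
  by move: Sx; rewrite (image_run (j := j)) //; lia.
have c_eq : 2 * i + size P = sp j + (sp j + len j).
  apply: (pal_window_centered occ pal); [lia|apply: image_sep_pred; lia|exact: image_sep|lia|].
  by move=> z zs _; rewrite (image_run (j := j)).
by rewrite /reflection /=; apply/eq_center_of; [exact: len_gt0|lia|lia].
Qed.

Lemma reflection_of_sep_center j x : p != p' -> ~ (exists j, S' j && S' j.+1) ->
  i <= x -> 2 * x + 1 < 2 * i + size P -> S x ->
  2 * (sp j + len j) < 2 * i + size P <= 2 * (sp j + len j) + 2 ->
  [/\ S' j = false, S' j.+1 = false &
      reflection p p' S' (j, 2) = center_of i (size P)].
Proof.
move=> pp' no_bb ix xc Sx /andP[qc cq].
have c_odd : 2 * i + size P = 2 * (sp j + len j) + 1.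
  case: (ltnP (2 * i + size P) (2 * (sp j + len j) + 2)) => c2; first lia.
  have : S (sp j + len j) = S (sp j + len j).+1.
    by apply: (occurs_pal_mirror occ pal); lia.
  by rewrite image_sep (image_run (j := j.+1)) // sposS; have := len_gt0 j.+1; lia.
have xs : x < sp j.
  case: (ltnP x (sp j)) => // sx.
  by move: Sx; rewrite (image_run (j := j)) //; lia.
have c_eq : 2 * i + size P = sp j + (sp j.+1 + len j.+1).
  apply: (pal_window_centered occ pal); [lia|apply: image_sep_pred; lia|exact: image_sep| |].
    by rewrite sposS; lia.
  by move=> z zr zq; rewrite (image_runs_around_sep (j := j)) //; lia.
have [Sj Sj1] : S' j = false /\ S' j.+1 = false.
  by apply: eq_len_succ => //; move: c_eq; rewrite sposS; lia.
split => //; rewrite /reflection /=.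
rewrite (_ : (sp j + p, 1) = center_of (sp j + p) 1); last by rewrite /center_of addn0.
by apply/eq_center_of => //; move: c_odd; rewrite Sj; lia.
Qed.

Lemma pal_center_reflection : p != p' -> ~ (exists j, S' j && S' j.+1) ->
  1 < count_mem true P ->
  exists c', is_center_occ S' c' /\ reflection p p' S' c' = center_of i (size P).
Proof.
move=> pp' no_bb /(pal_true_before_center occ pal) [x [ix xc] Sx].
have [j] := spos_cover (2 * i + size P).-1./2.
rewrite -divn2 => /andP[qs sq].
case: (ltnP ((2 * i + size P).-1 %/ 2) (sp j + len j)) => [qL|Lq].
  exists (j, 1); split; first by left.
  by apply: (reflection_of_run_center ix xc Sx); lia.
have [|Sj Sj1 refl] := reflection_of_sep_center (j := j) pp' no_bb ix xc Sx; first lia.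
by exists (j, 2); split; [right|exact: refl].
Qed.

Lemma maximal_pal_not_reflection c' : 0 < i -> S i.-1 != S (i + size P) ->
  P != [::] -> count_mem true P <= 1 -> is_center_occ S' c' ->
  reflection p p' S' c' != center_of i (size P).
Proof.
move=> i_gt0 maxi P0 cP; have n_gt0 : 0 < size P by rewrite lt0n size_eq0.
case: c' => j l [/= ->|[/= -> Sj Sj1]]; apply/eqP; rewrite /reflection /=.
  move/(eq_center_of _ _ (len_gt0 j) n_gt0) => c_eq.
  apply: (maximal_occ_window_uncentered occ i_gt0 maxi cP (s := sp j) (r := sp j + len j)).
  - exact: image_sep_pred.
  - exact: image_sep.
  - lia.
  - lia.
  - by move=> z zr _; rewrite (image_run (j := j)).
rewrite (_ : (sp j + p, 1) = center_of (sp j + p) 1); last by rewrite /center_of addn0.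
move/(eq_center_of _ _ (ltn0Sn 0) n_gt0) => c_eq.
apply: (maximal_occ_window_uncentered occ i_gt0 maxi cP (s := sp j) (r := sp j.+1 + len j.+1)).
- exact: image_sep_pred.
- exact: image_sep.
- by rewrite sposS; lia.
- by rewrite sposS Sj Sj1; lia.
- move=> z zr zq; rewrite (image_runs_around_sep (j := j)) //.
  by move: zq; rewrite sposS Sj Sj1; lia.
Qed.

Lemma maximal_pal_original_center : 0 < i -> S i.-1 != S (i + size P) ->
  P != [::] -> count_mem true P <= 1 ->
  original_center p p' S' S (center_of i (size P)).
Proof.
move=> i_gt0 maxi P0 cP; split; first exact: pal_center_occ.
by case=> c' [c'_occ /eqP]; apply/negP/maximal_pal_not_reflection.
Qed.

End Occurrence.

End Image.

Theorem lemma4 (p p' : nat) (S' S : nat -> bool) (P : seq bool) :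
  0 < p -> 0 < p' -> (p == p'.+1) || (p' == p.+1) ->
  sturmian S' -> ~ (exists i, S' i && S' i.+1) ->
  is_image p p' S' S ->
  palindrome P -> P != [::] -> maximal S P ->
  (original_pal p p' S' S P <-> count_mem true P <= 1).
Proof.
move=> p_gt0 p'_gt0 pp' _ no_bb img pal P0 [i0 max0].
have {}pp' : p != p' by case/orP: pp' => /eqP ->; lia.
split.
- case=> i [[_ occ _] [_ not_refl]]; rewrite leqNgt; apply/negP => cP.
  exact/not_refl/(pal_center_reflection p_gt0 p'_gt0 img occ pal pp' no_bb cP).
- move=> cP; exists i0; split => //; case: max0 => i_gt0 occ maxi.
  exact: (maximal_pal_original_center p_gt0 p'_gt0 img occ pal i_gt0 maxi P0 cP).
Qed.
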